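(* Let $G$ be a finite group, $H\le G$ and $p$ a prime. Then $\mathfrak{p}_{H,p}=\mathfrak{p}_{O^p(H),p}$ as ideals of the Burnside $G$-Tambara functor $\underline{A}_G$.
   Context: $A(H)$ is the Burnside ring of a finite group $H$; for $I\le H$, $\varphi^I_{H,p}\colon A(H)\to\mathbb{Z}/p\mathbb{Z}$ is the ring map $X\mapsto|X^I|\bmod p$. $\underline{A}_G$ has $\underline{A}_G(G/L)=A(L)$ (with restrictions, transfers $K\times_L-$, norms $\mathrm{Map}_L(K,-)$ and conjugations). For $K\le G$, $\mathfrak{p}_{K,p}$ is the ideal with $\mathfrak{p}_{K,p}(G/L)=\bigcap_{I\le L,\ I\preccurlyeq_GK}\ker(\varphi^I_{L,p})$, where $I\preccurlyeq_GK$ means $I$ is conjugate in $G$ to a subgroup of $K$. $O^p(H)$ is the intersection of all normal subgroups of $H$ of $p$-power index. *)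

From mathcomp Require Import all_boot all_order all_algebra all_fingroup all_solvable.
Set Implicit Arguments. Unset Strict Implicit. Unset Printing Implicit Defensive.
Import GRing.Theory.
Local Open Scope group_scope.

Section Burnside.
Variable gT : finGroupType.

Definition Oup (p : nat) (H : {set gT}) : {set gT} :=
  \bigcap_(N : {group gT} | (N <| H) && p.-nat #|H : N|) N.

Definition subconj (G I K : {set gT}) : Prop := exists2 g, g \in G & I \subset K :^ g.

(* A (virtual) element of the Burnside ring A(L), represented as a formal
   difference [X] - [Y] of two finite L-sets (X, Y given by actions of L).
   Every element of A(L) has this form. *)
Record burnside_elt (L : {set gT}) := BurnsideElt {
  bX : finType; bactX : action L bX;
  bY : finType; bactY : action L bY }.

Definition mark (L : {set gT}) (Z : burnside_elt L) (I : {set gT}) : int :=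
  (#|'Fix_(bactX Z)(I)|%:Z - #|'Fix_(bactY Z)(I)|%:Z)%R.

Definition in_ker_phi (p : nat) (L : {set gT}) (Z : burnside_elt L) (I : {set gT}) : Prop :=
  (p%:Z %| mark Z I)%Z.

Definition in_frakp (G K : {set gT}) (p : nat) (L : {set gT}) (Z : burnside_elt L) : Prop :=
  forall I : {group gT}, I \subset L -> subconj G I K -> in_ker_phi p Z I.

End Burnside.

From mathcomp Require Import all_boot all_order all_algebra all_fingroup all_solvable.
From mathcomp Require Import ring.
Set Implicit Arguments. Unset Strict Implicit. Unset Printing Implicit Defensive.
Import GRing.Theory.
Local Open Scope group_scope.

(* If K <| I has p-power index, a Sylow p-subgroup P of I satisfies K P = I and
   acts on the K-fixed points of any I-set X with fixed set X^I, so
   |X^K| = |X^I| mod p; hence phi^K and phi^I have the same kernel.  The normal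
   subgroups of p-power index are closed under intersection, so O^p(I) is one
   of them, and I <= H^g forces O^p(I) <= O^p(H)^g.  Thus every condition
   defining p_{H,p} follows from one defining p_{O^p(H),p}. *)

Section PowerIndex.

Variables (gT : finGroupType) (p : nat).
Implicit Types G H I K N P : {group gT}.

Lemma pnat_index_sub I H N :
  I \subset H -> N <| H -> p.-nat #|H : N| -> p.-nat #|I : N|.
Proof.
move=> sIH /andP[_ nNH]; apply: pnat_dvd.
have nNI := subset_trans sIH nNH.
by rewrite -card_quotient // -card_quotient // cardSg ?quotientS.
Qed.

Lemma pnat_indexI G H K :
  H \subset G -> K <| G -> p.-nat #|G : H| -> p.-nat #|G : K| ->
  p.-nat #|G : H :&: K|.
Proof.
move=> sHG nsKG pH pK.
by rewrite -(Lagrange_index sHG (subsetIl H K)) pnatM pH indexgI (pnat_index_sub sHG).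
Qed.

Lemma normal_pindex_joinSylow I K P :
  K <| I -> p.-nat #|I : K| -> p.-Sylow(I) P -> K <*> P = I.
Proof.
move=> nsKI pIK sylP; have sPI := pHall_sub sylP.
have [sKI nKI] := andP nsKI.
have nKP := subset_trans sPI nKI.
apply/eqP; rewrite eqEsubset join_subG sKI sPI /=.
have pIqK : p.-group (I / K) by rewrite /pgroup card_quotient.
rewrite -(quotientSGK nKI (joing_subl K P)).
by rewrite -(pHall_id (quotient_pHall nKP sylP) pIqK) quotientS ?joing_subr.
Qed.

Lemma bigcap_closedI (Q : pred {group gT}) G :
  Q G -> {in Q &, forall A B, Q (A :&: B)%G} -> Q (\bigcap_(N | Q N) N)%G.
Proof.
move=> QG QI; case: (arg_minnP (fun N : {group gT} => #|N|) QG) => M QM minM.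
suff -> : (\bigcap_(N | Q N) N)%G = M :> {group gT} by [].
apply/group_inj/eqP; rewrite eqEsubset (bigcap_inf M QM); apply/bigcapsP => N QN.
apply/setIidPl/eqP; rewrite eqEcard subsetIl.
exact: minM (QI M N QM QN).
Qed.

End PowerIndex.

Section PResidual.

Variables (gT : finGroupType) (p : nat).
Implicit Types H I : {group gT}.

Canonical Oup_group H := Eval hnf in [group of Oup p H].

Lemma Oup_normal_pindex H : (Oup p H <| H) && p.-nat #|H : Oup p H|.
Proof.
apply: (bigcap_closedI (Q := fun N => (N <| H) && p.-nat #|H : N|) (G := H));
  first by rewrite normal_refl indexgg.
move=> A B /andP[nsAH pA] /andP[nsBH pB].
by rewrite /= normalI // pnat_indexI ?normal_sub.
Qed.

Lemma Oup_sub H : Oup p H \subset H.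
Proof. by case/andP: (Oup_normal_pindex H) => /normal_sub. Qed.

Lemma Oup_conj_sub I H g : I \subset H :^ g -> Oup p I \subset Oup p H :^ g.
Proof.
move=> sIHg; rewrite -sub_conjgV; apply/bigcapsP => N /andP[nsNH pN].
rewrite sub_conjgV; apply: subset_trans (subsetIr I (N :^ g)).
have nsNHg : N :^ g <| H :^ g by rewrite normalJ.
apply: bigcap_inf; rewrite (normalGI sIHg nsNHg) /= indexgI.
by apply: pnat_index_sub sIHg nsNHg _; rewrite indexJg.
Qed.

End PResidual.

Lemma card_afix_normal_pindex_mod (aT : finGroupType) (D : {group aT})
    (sT : finType) (to : action D sT) (p : nat) (K I : {group aT}) :
  I \subset D -> K <| I -> p.-nat #|I : K| ->
  #|'Fix_to(K)| = #|'Fix_to(I)| %[mod p].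
Proof.
move=> sID nsKI pIK; have [P sylP] := Sylow_exists p I.
have sPD := subset_trans (pHall_sub sylP) sID.
have sKD := subset_trans (normal_sub nsKI) sID.
rewrite -(normal_pindex_joinSylow nsKI pIK sylP) afixYin //.
apply: pgroup_fix_mod (pHall_pgroup sylP) _.
have := acts_subnorm_fix to K; rewrite (setIidPr sKD); apply: subset_trans.
by rewrite subsetI sPD (subset_trans (pHall_sub sylP) (normal_norm nsKI)).
Qed.

Section Marks.

Local Open Scope ring_scope.

Variables (gT : finGroupType) (p : nat) (L : {group gT}) (Z : burnside_elt L).

Lemma mark_normal_pindex_mod (K I : {group gT}) :
  I \subset L -> K <| I -> p.-nat #|I : K| -> (mark Z K = mark Z I %[mod p])%Z.
Proof.
move=> sIL nsKI pIK.
have card_afix_modz (sT : finType) (to : action L sT) :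
    (#|'Fix_to(K)|%:Z = #|'Fix_to(I)|%:Z %[mod p])%Z.
  by rewrite !modz_nat (card_afix_normal_pindex_mod to sIL nsKI pIK).
apply/eqP; rewrite eqz_mod_dvd /mark.
set xK := #|_|%:Z; set yK := #|_|%:Z; set xI := #|_|%:Z; set yI := #|_|%:Z.
have -> : xK - yK - (xI - yI) = (xK - xI) - (yK - yI) by ring.
by rewrite rpredB // -eqz_mod_dvd; apply/eqP; apply: card_afix_modz.
Qed.

Lemma in_ker_phi_normal_pindex (K I : {group gT}) :
  I \subset L -> K <| I -> p.-nat #|I : K| ->
  in_ker_phi p Z K <-> in_ker_phi p Z I.
Proof.
move=> sIL nsKI pIK.
by rewrite /in_ker_phi -!(sameP eqP dvdz_mod0P) (mark_normal_pindex_mod sIL nsKI pIK).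
Qed.

End Marks.

Theorem lemma4p15 (gT : finGroupType) (G H : {group gT}) (p : nat) :
  prime p -> H \subset G ->
  forall (L : {group gT}), L \subset G ->
  forall Z : burnside_elt L,
    in_frakp G H p Z <-> in_frakp G (Oup p H) p Z.
Proof.
move=> _ _ L _ Z; split=> [kerH I sIL [g Gg sIHg] | kerO I sIL [g Gg sIHg]].
  by apply: kerH => //; exists g; rewrite // (subset_trans sIHg) ?conjSg ?Oup_sub.
have /andP[nsOI pOI] := Oup_normal_pindex p I.
rewrite -(in_ker_phi_normal_pindex Z sIL nsOI pOI).
apply: kerO; first exact: subset_trans (normal_sub nsOI) sIL.
by exists g; rewrite ?Oup_conj_sub.
Qed.
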